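(* Let $X,Y$ be q-cycle sets and $p:X\to Y$ an epimorphism. If $X$ is irreducible, then $Y$ is irreducible.
   Context: A q-cycle set is a non-empty set $X$ with operations $\cdot,:$ such that each $y\mapsto x\cdot y$ is bijective and $(x\cdot y)\cdot(x\cdot z)=(y:x)\cdot(y\cdot z)$, $(x:y):(x:z)=(y\cdot x):(y:z)$, $(x\cdot y):(x\cdot z)=(y:x)\cdot(y:z)$ for all $x,y,z$. An epimorphism is a surjective map $p$ with $p(a\cdot b)=p(a)\cdot p(b)$ and $p(a:b)=p(a):p(b)$. A sub-q-cycle set is a subset that is a q-cycle set under the restricted operations (the empty set also counts); a q-cycle set is irreducible if $\emptyset$ and itself are its only sub-q-cycle sets. *)

From Stdlib Require Import Classical.

Definition bijective {A B : Type} (f : A -> B) : Prop :=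
  (forall a1 a2, f a1 = f a2 -> a1 = a2) /\ (forall b, exists a, f a = b).

(* A q-cycle set structure on the carrier X: operations dot (x . y) and col (x : y). *)
Definition is_qcycle_set (X : Type) (dot col : X -> X -> X) : Prop :=
  (exists x : X, True) /\
  (forall x, bijective (dot x)) /\
  (forall x y z, dot (dot x y) (dot x z) = dot (col y x) (dot y z)) /\
  (forall x y z, col (col x y) (col x z) = col (dot y x) (col y z)) /\
  (forall x y z, col (dot x y) (dot x z) = dot (col y x) (col y z)).

Definition qcs_epimorphism {X Y : Type} (dotX colX : X -> X -> X)
  (dotY colY : Y -> Y -> Y) (p : X -> Y) : Prop :=
  (forall y, exists x, p x = y) /\
  (forall a b, p (dotX a b) = dotY (p a) (p b)) /\
  (forall a b, p (colX a b) = colY (p a) (p b)).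

(* S is a sub-q-cycle set of (X, dot, col): S is closed under both operations
   (so they restrict to S) and S with the restricted operations is a q-cycle
   set, the empty subset being allowed. Concretely: for x in S the restricted
   map y |-> x . y is a bijection S -> S (injectivity is inherited; surjectivity
   onto S must be required), and the three identities hold (inherited). *)
Definition sub_qcycle_set {X : Type} (dot col : X -> X -> X) (S : X -> Prop) : Prop :=
  (forall x y, S x -> S y -> S (dot x y)) /\
  (forall x y, S x -> S y -> S (col x y)) /\
  (forall x, S x -> forall y, S y -> exists z, S z /\ dot x z = y) /\
  (forall x y, S x -> S y -> forall z, S z -> dot x y = dot x z -> y = z) /\
  (forall x y z, S x -> S y -> S z ->
     dot (dot x y) (dot x z) = dot (col y x) (dot y z)) /\
  (forall x y z, S x -> S y -> S z ->
     col (col x y) (col x z) = col (dot y x) (col y z)) /\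
  (forall x y z, S x -> S y -> S z ->
     col (dot x y) (dot x z) = dot (col y x) (col y z)).

Definition qcs_irreducible {X : Type} (dot col : X -> X -> X) : Prop :=
  forall S : X -> Prop, sub_qcycle_set dot col S ->
    (forall x, ~ S x) \/ (forall x, S x).


(* The preimage under p of a sub-q-cycle set of Y is a sub-q-cycle set of X.
   The only non-inherited axiom is that left multiplication by x maps the
   preimage onto itself: the solution z of x . z = y in X is sent by p to the
   solution of p x . w = p y in Y, which lies in the subset by uniqueness.
   Irreducibility of X then forces the preimage, hence (p being onto) the
   subset itself, to be empty or everything. *)

Section EpimorphicImage.

Variables (X Y : Type) (dotX colX : X -> X -> X) (dotY colY : Y -> Y -> Y)
  (p : X -> Y).

Hypothesis qcsX : is_qcycle_set X dotX colX.
Hypothesis qcsY : is_qcycle_set Y dotY colY.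
Hypothesis epi : qcs_epimorphism dotX colX dotY colY p.

Lemma sub_qcycle_set_preimage (S : Y -> Prop) :
  sub_qcycle_set dotY colY S -> sub_qcycle_set dotX colX (fun x => S (p x)).
Proof.
  destruct qcsX as [_ [bijX [idX1 [idX2 idX3]]]].
  destruct qcsY as [_ [bijY _]].
  destruct epi as [_ [p_dot p_col]].
  intros [S_dot [S_col [S_div _]]].
  repeat split.
  - intros x y Sx Sy. rewrite p_dot. auto.
  - intros x y Sx Sy. rewrite p_col. auto.
  - intros x Sx y Sy.
    destruct (proj2 (bijX x) y) as [z xz_y].
    destruct (S_div _ Sx _ Sy) as [w [Sw xw_y]].
    assert (pz_w : p z = w).
    { apply (proj1 (bijY (p x))). rewrite xw_y, <- p_dot, xz_y. reflexivity. }
    exists z. rewrite pz_w. auto.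
  - intros x y _ _ z _. apply (proj1 (bijX x)).
  - intros; apply idX1.
  - intros; apply idX2.
  - intros; apply idX3.
Qed.

Lemma qcs_irreducible_epimorphic_image :
  qcs_irreducible dotX colX -> qcs_irreducible dotY colY.
Proof.
  intros irrX S subS.
  destruct epi as [p_onto _].
  destruct (irrX _ (sub_qcycle_set_preimage S subS)) as [empty | full].
  - left. intros y. destruct (p_onto y) as [x <-]. apply empty.
  - right. intros y. destruct (p_onto y) as [x <-]. apply full.
Qed.

End EpimorphicImage.

Theorem mainTheorem15 (X Y : Type) (dotX colX : X -> X -> X)
  (dotY colY : Y -> Y -> Y) (p : X -> Y) :
  is_qcycle_set X dotX colX ->
  is_qcycle_set Y dotY colY ->
  qcs_epimorphism dotX colX dotY colY p ->
  qcs_irreducible dotX colX ->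
  qcs_irreducible dotY colY.
Proof.
  exact (qcs_irreducible_epimorphic_image X Y dotX colX dotY colY p).
Qed.
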